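(* (a) For any two Gödel sets $V,V'$, a sentence of the BS class w.r.t. 1-satisfiability is 1-satisfiable in $G_V$ if and only if it is 1-satisfiable in $G_{V'}$. (b) For any two infinite Gödel sets $V,V'$, a sentence of the BS class w.r.t. validity is valid in $G_V$ if and only if it is valid in $G_{V'}$. (c) For every $m\ge2$, the set of sentences of the BS class w.r.t. validity that are valid in $G_{m+1}$ is a proper subset of the set of such sentences valid in $G_m$.
   Context: A Gödel set is a closed set $V\subseteq[0,1]$ with $0,1\in V$. A $V$-interpretation assigns to each $k$-ary predicate a function $U^k\to V$ on a nonempty domain $U$ (constants as usual); $\bot\mapsto0$, $\wedge,\vee$ are $\min,\max$, $\mathcal I(A\supset B)=1$ if $\mathcal I(A)\le\mathcal I(B)$ and $=\mathcal I(B)$ otherwise, $\forall,\exists$ are $\inf,\sup$ over $U$. A sentence is valid in $G_V$ if every $V$-interpretation gives it value $1$, and 1-satisfiable in $G_V$ if some $V$-interpretation gives it value $1$. For $m\ge2$, $G_m$ denotes $G_V$ for the $m$-element Gödel set $V_m=\{1\}\cup\{1-1/k: 1\le k\le m-1\}$. The BS class w.r.t. 1-satisfiability consists of sentences $\exists\bar x\forall\bar y\,\psi$, and the BS class w.r.t. validity of sentences $\forall\bar x\exists\bar y\,\psi$, where $\psi$ is quantifier-free, the tuples may be empty, and the signature has no function symbols of positive arity (propositional variables, i.e. $0$-ary predicates, are allowed). *)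

From HB Require Import structures.
From mathcomp Require Import all_boot all_order all_algebra.
From mathcomp Require Import all_classical all_reals all_analysis.
From mathcomp Require Import Rstruct Rstruct_topology.
From Stdlib Require Import Rdefinitions.

Set Implicit Arguments.
Unset Strict Implicit.
Unset Printing Implicit Defensive.

Import Order.TTheory GRing.Theory Num.Theory.
Local Open Scope classical_set_scope.
Local Open Scope ring_scope.

Inductive fo_term : Type :=
| TVar : nat -> fo_term
| TCst : nat -> fo_term.

(* Atomic formulas P(t_1,...,t_k): a predicate symbol together with its
   argument list; the arity of the occurrence is the length of the list
   (the pair (p, length) is the actual predicate symbol).  0-ary predicates
   are propositional variables. *)
Inductive fo_form : Type :=
| FBot : fo_form
| FAtom : nat -> seq fo_term -> fo_form
| FAnd : fo_form -> fo_form -> fo_form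
| FOr : fo_form -> fo_form -> fo_form
| FImp : fo_form -> fo_form -> fo_form
| FAll : nat -> fo_form -> fo_form
| FEx : nat -> fo_form -> fo_form.

Fixpoint qfree (A : fo_form) : bool :=
  match A with
  | FBot | FAtom _ _ => true
  | FAnd B C | FOr B C | FImp B C => qfree B && qfree C
  | FAll _ _ | FEx _ _ => false
  end.

Definition term_vars (t : fo_term) : seq nat :=
  match t with TVar x => [:: x] | TCst _ => [::] end.

Fixpoint free_vars (A : fo_form) : seq nat :=
  match A with
  | FBot => [::]
  | FAtom _ ts => flatten (map term_vars ts)
  | FAnd B C | FOr B C | FImp B C => free_vars B ++ free_vars C
  | FAll x B | FEx x B => seq.filter (fun y => y != x) (free_vars B)
  end.

Definition sentence (A : fo_form) : bool := free_vars A == [::].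

Definition alls (xs : seq nat) (A : fo_form) : fo_form := foldr FAll A xs.
Definition exs (xs : seq nat) (A : fo_form) : fo_form := foldr FEx A xs.

Definition BS_sat (A : fo_form) : Prop :=
  sentence A /\
  exists (xs ys : seq nat) (psi : fo_form), qfree psi /\ A = exs xs (alls ys psi).

Definition BS_val (A : fo_form) : Prop :=
  sentence A /\
  exists (xs ys : seq nat) (psi : fo_form), qfree psi /\ A = alls xs (exs ys psi).

Definition godel_set (V : set R) : Prop :=
  closed V /\ V `<=` [set x | 0 <= x <= 1] /\ V 0 /\ V 1.

Definition Vm (m : nat) : set R :=
  [set x : R | x = 1 \/ exists k : nat, (0 < k)%nat /\ (k < m)%nat /\ x = 1 - (k%:R)^-1].

Definition upd (U : Type) (e : nat -> U) (x : nat) (u : U) : nat -> U :=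
  fun y => if y == x then u else e y.

Definition eval_term (U : Type) (c : nat -> U) (e : nat -> U) (t : fo_term) : U :=
  match t with TVar x => e x | TCst k => c k end.

Fixpoint eval (U : Type) (c : nat -> U) (P : nat -> seq U -> R)
  (e : nat -> U) (A : fo_form) : R :=
  match A with
  | FBot => 0
  | FAtom p ts => P p (map (eval_term c e) ts)
  | FAnd B C => Num.min (eval c P e B) (eval c P e C)
  | FOr B C => Num.max (eval c P e B) (eval c P e C)
  | FImp B C =>
      if eval c P e B <= eval c P e C then 1 else eval c P e C
  | FAll x B => inf [set eval c P (upd e x u) B | u in [set: U]]
  | FEx x B => sup [set eval c P (upd e x u) B | u in [set: U]]
  end.

(* A V-interpretation: nonempty domain U (witnessed by u0), constants c,
   and predicates P valued in V.  The value of a sentence is computed in an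
   arbitrary assignment (irrelevant for closed formulas); we use the constant
   assignment at u0. *)
Definition V_interp (V : set R) (U : Type) (P : nat -> seq U -> R) : Prop :=
  forall p l, V (P p l).

Definition valid (V : set R) (A : fo_form) : Prop :=
  forall (U : Type) (u0 : U) (c : nat -> U) (P : nat -> seq U -> R),
    V_interp V P -> eval c P (fun _ => u0) A = 1.

Definition sat1 (V : set R) (A : fo_form) : Prop :=
  exists (U : Type) (u0 : U) (c : nat -> U) (P : nat -> seq U -> R),
    V_interp V P /\ eval c P (fun _ => u0) A = 1.

(** If a map [f] on truth values fixes 0 and commutes with min, max and the
    Goedel implication on the truth values of the atoms of a quantifier-free
    [psi], then applying [f] to all atoms turns the value of [psi] into its
    image under [f].

    (a) If [exists xs, forall ys, psi] gets value 1, some witnesses [us] make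
    every instance of [psi] positive; sending every positive value to 1 and 0 to
    0 is such a map, so the resulting {0,1}-valued interpretation (valued in any
    Goedel set) still gives the sentence value 1.

    (b) If [forall xs, exists ys, psi] gets a value < 1, some witnesses [us] keep
    [exists ys, psi] below 1.  Restricting to the finite domain spanned by [us],
    the constants of [psi] and one more element leaves only finitely many truth
    values of atoms; a strictly increasing map of them into an infinite Goedel
    set, fixing 0 and 1, is again such a map, and the supremum over ys, now a
    maximum over finitely many values below 1, stays below 1.

    (c) [V_m] is contained in [V_(m+1)].  The sentence [\/_(i<m) (p_(i+1) -> p_i)]
    has value < 1 iff [p_0 < p_1 < ... < p_m], which needs [m + 1] distinct truth
    values: available in [V_(m+1)], but not in the [m]-element set [V_m]. *)

From Pilot Require Import Defs.
From mathcomp Require Import all_boot all_order all_algebra.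
From mathcomp Require Import all_classical all_reals all_analysis.
From mathcomp Require Import Rstruct Rstruct_topology.
From Stdlib Require Import Rdefinitions.

Set Implicit Arguments.
Unset Strict Implicit.
Unset Printing Implicit Defensive.

Import Order.TTheory GRing.Theory Num.Theory Order.NatMonotonyTheory.
Local Open Scope classical_set_scope.
Local Open Scope ring_scope.
(* MathComp-Analysis exports another [eval]. *)
Local Notation eval := Defs.eval.

Section RangeBounds.
Variables (T : Type) (t : T) (f : T -> R).
Hypothesis f01 : forall u, 0 <= f u <= 1.

Let range_neq0 : range f !=set0. Proof. by exists (f t), t. Qed.

Lemma inf_range_le u : inf (range f) <= f u.
Proof. by apply: ge_inf; [exists 0 => _ [v _ <-]; case/andP: (f01 v)|exists u]. Qed.

Lemma le_sup_range u : f u <= sup (range f).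
Proof. by apply: ub_le_sup; [exists 1 => _ [v _ <-]; case/andP: (f01 v)|exists u]. Qed.

Lemma le_inf_range x : (forall u, x <= f u) -> x <= inf (range f).
Proof. by move=> le_xf; apply: lb_le_inf range_neq0 _ => _ [u _ <-]. Qed.

Lemma sup_range_le x : (forall u, f u <= x) -> sup (range f) <= x.
Proof. by move=> le_fx; apply: ge_sup range_neq0 _ => _ [u _ <-]. Qed.

Lemma inf_range_lt x : inf (range f) < x -> exists u, f u < x.
Proof. by move=> /(inf_lt range_neq0) [_ [u _ <-]]; exists u. Qed.

Lemma sup_range_gt x : x < sup (range f) -> exists u, x < f u.
Proof. by move=> /(sup_gt range_neq0) [_ [u _ <-]]; exists u. Qed.

Lemma inf_range01 : 0 <= inf (range f) <= 1.
Proof.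
rewrite le_inf_range ?(le_trans (inf_range_le t)) //; first by case/andP: (f01 t).
by move=> u; case/andP: (f01 u).
Qed.

Lemma sup_range01 : 0 <= sup (range f) <= 1.
Proof.
rewrite sup_range_le ?(le_trans _ (le_sup_range t)) ?andbT //; first by case/andP: (f01 t).
by move=> u; case/andP: (f01 u).
Qed.

End RangeBounds.

Fixpoint upds (U : Type) (e : nat -> U) (xs : seq nat) (us : seq U) : nat -> U :=
  match xs, us with
  | x :: xs', u :: us' => upds (upd e x u) xs' us'
  | _, _ => e
  end.

Lemma comp_upds (U D : Type) (f : D -> U) (e : nat -> D) xs ws :
  f \o upds e xs ws = upds (f \o e) xs (map f ws).
Proof.
elim: xs e ws => [|x xs IH] e [|w ws] //=; rewrite IH; congr upds.
by apply: funext => y; rewrite /upd /=; case: ifP.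
Qed.

Section Eval.
Variables (U : Type) (c : nat -> U) (P : nat -> seq U -> R).
Hypothesis P01 : forall p l, 0 <= P p l <= 1.

Lemma eval01 e A : 0 <= eval c P e A <= 1.
Proof.
elim: A e => [|p ts|B IB C IC|B IB C IC|B IB C IC|x B IB|x B IB] e /=.
- by rewrite lexx ler01.
- exact: P01.
- by rewrite le_min ge_min; case/andP: (IB e) => -> ->; case/andP: (IC e) => ->.
- by rewrite le_max ge_max; case/andP: (IB e) => -> ->; case/andP: (IC e) => _ ->.
- by case: ifP => _; [rewrite ler01 lexx|exact: IC].
- exact: (inf_range01 (e x) (fun u => IB (upd e x u))).
- exact: (sup_range01 (e x) (fun u => IB (upd e x u))).
Qed.

Lemma eval_alls_le_inst xs C e ws : size ws = size xs ->
  eval c P e (alls xs C) <= eval c P (upds e xs ws) C.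
Proof.
elim: xs e ws => [|x xs IH] e [|w ws] //= [/IH le_inst]; apply: le_trans (le_inst _).
exact: (inf_range_le (fun u => eval01 (upd e x u) (alls xs C))).
Qed.

Lemma eval_inst_le_exs xs C e ws : size ws = size xs ->
  eval c P (upds e xs ws) C <= eval c P e (exs xs C).
Proof.
elim: xs e ws => [|x xs IH] e [|w ws] //= [/IH le_inst]; apply: le_trans (le_inst _) _.
exact: (le_sup_range (fun u => eval01 (upd e x u) (exs xs C))).
Qed.

Lemma eval_alls_ge xs C e a :
  (forall ws, size ws = size xs -> a <= eval c P (upds e xs ws) C) ->
  a <= eval c P e (alls xs C).
Proof.
elim: xs e => [|x xs IH] e /= le_inst; first exact: (le_inst [::]).
apply: (le_inf_range (e x)) => u; apply: IH => ws sz_ws.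
by apply: (le_inst (u :: ws)); rewrite /= sz_ws.
Qed.

Lemma eval_exs_le xs C e a :
  (forall ws, size ws = size xs -> eval c P (upds e xs ws) C <= a) ->
  eval c P e (exs xs C) <= a.
Proof.
elim: xs e => [|x xs IH] e /= inst_le; first exact: (inst_le [::]).
apply: (sup_range_le (e x)) => u; apply: IH => ws sz_ws.
by apply: (inst_le (u :: ws)); rewrite /= sz_ws.
Qed.

Lemma eval_alls_lt_inst xs C e a : eval c P e (alls xs C) < a ->
  exists2 ws, size ws = size xs & eval c P (upds e xs ws) C < a.
Proof.
elim: xs e => [|x xs IH] e /=; first by exists [::].
by move=> /(inf_range_lt (e x)) [u /IH [ws sz_ws lt_inst]]; exists (u :: ws); rewrite /= ?sz_ws.
Qed.

Lemma eval_exs_gt_inst xs C e a : a < eval c P e (exs xs C) ->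
  exists2 ws, size ws = size xs & a < eval c P (upds e xs ws) C.
Proof.
elim: xs e => [|x xs IH] e /=; first by exists [::].
by move=> /(sup_range_gt (e x)) [u /IH [ws sz_ws lt_inst]]; exists (u :: ws); rewrite /= ?sz_ws.
Qed.

End Eval.

Definition term_consts (t : fo_term) : seq nat :=
  match t with TCst k => [:: k] | TVar _ => [::] end.

Fixpoint consts (A : fo_form) : seq nat :=
  match A with
  | FBot => [::]
  | FAtom _ ts => flatten (map term_consts ts)
  | FAnd B C | FOr B C | FImp B C => consts B ++ consts C
  | FAll _ B | FEx _ B => consts B
  end.

Fixpoint preds (A : fo_form) : seq (nat * nat) :=
  match A with
  | FBot => [::]
  | FAtom p ts => [:: (p, size ts)]
  | FAnd B C | FOr B C | FImp B C => preds B ++ preds C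
  | FAll _ B | FEx _ B => preds B
  end.

Definition godel_imp (a b : R) : R := if a <= b then 1 else b.

Definition godel_morph (S : {pred R}) (f : R -> R) : Prop :=
  [/\ f 0 = 0, {in S &, {morph f : a b / Num.min a b}},
      {in S &, {morph f : a b / Num.max a b}} &
      {in S &, {morph f : a b / godel_imp a b}}].

Definition map_interp (U D : Type) (f : R -> R) (emb : D -> U)
  (P : nat -> seq U -> R) : nat -> seq D -> R :=
  fun p l => f (P p (map emb l)).

Lemma mem_catl (T : eqType) {s1 s2 : seq T} {x : T} : x \in s1 -> x \in s1 ++ s2.
Proof. by rewrite mem_cat => ->. Qed.

Lemma mem_catr (T : eqType) {s1 s2 : seq T} {x : T} : x \in s2 -> x \in s1 ++ s2.
Proof. by rewrite mem_cat orbC => ->. Qed.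

Section QfreeMap.
Variables (U D : Type) (c : nat -> U) (P : nat -> seq U -> R).
Variables (c' : nat -> D) (emb : D -> U) (S : {pred R}) (f : R -> R).
Hypotheses (S0 : 0 \in S) (S1 : 1 \in S) (fS : godel_morph S f).

Lemma map_eval_terms e' ts :
  {in flatten (map term_consts ts), forall k, emb (c' k) = c k} ->
  map emb (map (eval_term c' e') ts) = map (eval_term c (emb \o e')) ts.
Proof.
elim: ts => //= t ts IH c'E; rewrite IH => [|k kts]; last exact: c'E (mem_catr kts).
by case: t c'E => //= k c'E; rewrite c'E // mem_head.
Qed.

Lemma eval_qfree_map e' B : qfree B ->
  {in consts B, forall k, emb (c' k) = c k} ->
  (forall p l, (p, size l) \in preds B -> P p (map emb l) \in S) ->
  eval c P (emb \o e') B \in S /\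
  eval c' (map_interp f emb P) e' B = f (eval c P (emb \o e') B).
Proof.
case: fS => f0 fmin fmax fimp.
elim: B => [|p ts|B IB C IC|B IB C IC|B IB C IC|//|//] /=; first by rewrite f0.
  move=> _ c'E PS; rewrite /map_interp -map_eval_terms //; split=> //.
  by apply: PS; rewrite !size_map mem_seq1.
all: move=> /andP[qB qC] c'E PS.
all: have [SB ->] := IB qB (fun k kB => c'E k (mem_catl kB)) (fun p l pB => PS p l (mem_catl pB)).
all: have [SC ->] := IC qC (fun k kC => c'E k (mem_catr kC)) (fun p l pC => PS p l (mem_catr pC)).
- by rewrite (fmin _ _ SB SC) minEle; case: ifP.
- by rewrite (fmax _ _ SB SC) maxEle; case: ifP.
- by rewrite -[RHS]/(f (godel_imp _ _)) fimp //; rewrite /godel_imp; case: ifP.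
Qed.

End QfreeMap.

Lemma homo_morph_min (S : {pred R}) (f : R -> R) :
  {in S &, {homo f : a b / a <= b}} -> {in S &, {morph f : a b / Num.min a b}}.
Proof.
move=> f_le a b aS bS; case: (leP a b) => [ab|/ltW ba].
  by rewrite !min_l // f_le.
by rewrite !min_r // f_le.
Qed.

Lemma homo_morph_max (S : {pred R}) (f : R -> R) :
  {in S &, {homo f : a b / a <= b}} -> {in S &, {morph f : a b / Num.max a b}}.
Proof.
move=> f_le a b aS bS; case: (leP a b) => [ab|/ltW ba].
  by rewrite !max_r // f_le.
by rewrite !max_l // f_le.
Qed.

Lemma strict_godel_morph (S : {pred R}) (f : R -> R) :
  f 0 = 0 -> f 1 = 1 -> {in S &, {homo f : a b / a < b}} -> godel_morph S f.
Proof.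
move=> f0 f1 f_lt; have f_le := ltW_homo_in f_lt.
split=> //; [exact: homo_morph_min|exact: homo_morph_max|].
move=> a b aS bS; rewrite /godel_imp; case: (leP a b) => [ab|ba].
  by rewrite f_le.
by rewrite leNgt f_lt.
Qed.

Definition pos_indicator (x : R) : R := if 0 < x then 1 else 0.

Lemma pos_indicator_morph : godel_morph [pred x | 0 <= x] pos_indicator.
Proof.
have ind_le : {in [pred x | 0 <= x] &, {homo pos_indicator : a b / a <= b}}.
  move=> a b _ _ ab; rewrite /pos_indicator; case: (ltrP 0 a) => [a_gt0|_].
    by rewrite (lt_le_trans a_gt0 ab).
  by case: ifP; rewrite ?ler01.
split; [by rewrite /pos_indicator ltxx|exact: homo_morph_min|exact: homo_morph_max|].
move=> a b; rewrite !inE => a_ge0 b_ge0; rewrite /godel_imp; case: (leP a b) => [ab|ba].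
  by rewrite ind_le ?inE // /pos_indicator ltr01.
by rewrite /pos_indicator (le_lt_trans b_ge0 ba); case: ifP; rewrite ?lexx ?ler10.
Qed.

Lemma sat1_BS_transfer (V V' : set R) (A : fo_form) :
  V `<=` [set x | 0 <= x <= 1] -> V' 0 -> V' 1 ->
  BS_sat A -> sat1 V A -> sat1 V' A.
Proof.
move=> V01 V'0 V'1 [_ [xs [ys [psi [qpsi ->]]]]] [U [u0 [c [P [VP evalA]]]]].
have P01 p l : 0 <= P p l <= 1 by exact: V01.
pose e0 : nat -> U := fun=> u0.
have [us sz_us alls_gt0] : exists2 us, size us = size xs &
    0 < eval c P (upds e0 xs us) (alls ys psi).
  by apply: eval_exs_gt_inst; rewrite evalA ltr01.
pose P' := map_interp pos_indicator id P.
have P'01 p l : 0 <= P' p l <= 1.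
  by rewrite /P' /map_interp /pos_indicator; case: ifP; rewrite ?lexx ?ler01.
exists U, u0, c, P'; split.
  by move=> p l; rewrite /P' /map_interp /pos_indicator; case: ifP.
apply/eqP; rewrite eq_le.
case/andP: (eval01 c P'01 e0 (exs xs (alls ys psi))) => _ ->.
apply: le_trans (eval_inst_le_exs c P'01 _ _ sz_us); apply: eval_alls_ge => js sz_js.
pose nneg := [pred x : R | 0 <= x].
have P_nneg p l : P p (map id l) \in nneg by rewrite inE; case/andP: (P01 p (map id l)).
have [_ ->] := eval_qfree_map (c' := c) (emb := id) (lexx 0 : 0 \in nneg) ler01
  pos_indicator_morph (upds (upds e0 xs us) ys js) qpsi (fun _ _ => erefl) (fun p l _ => P_nneg p l).
by rewrite /pos_indicator (lt_le_trans alls_gt0 (eval_alls_le_inst c P01 _ _ sz_js)).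
Qed.

Section CountLt.
Context {disp : Order.disp_t} {T : orderType disp}.
Implicit Types (s : seq T) (x y : T).

Lemma sorted_index_count s x : sorted <%O s -> x \in s -> index x s = count (< x)%O s.
Proof.
elim: s => //= a s IH a_s; have /allP gt_a := order_path_min lt_trans a_s.
rewrite inE eq_sym; case: eqP => [<- _|_ xs].
  by rewrite ltxx (@eq_in_count _ _ pred0) ?count_pred0 // => y /gt_a /lt_gtF.
by rewrite gt_a // IH // (path_sorted a_s).
Qed.

Lemma count_lt_min s x : {in s, forall y, x <= y}%O -> count (< x)%O s = 0%nat.
Proof. by move=> ge_x; rewrite (@eq_in_count _ _ pred0) ?count_pred0 // => y /ge_x /le_gtF. Qed.

Lemma count_lt_max s x : uniq s -> x \in s -> {in s, forall y, y <= x}%O ->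
  count (< x)%O s = (size s).-1.
Proof.
move=> s_uniq xs le_x; rewrite -(count_predC (< x)%O s).
rewrite (@eq_in_count _ (predC (< x)%O) (pred1 x)); first by rewrite count_uniq_mem // xs addn1.
by move=> y /le_x yx /=; rewrite lt_neqAle yx andbT negbK.
Qed.

Lemma count_lt_size s x : x \in s -> (count (< x)%O s < size s)%nat.
Proof.
move=> xs; rewrite ltn_neqAle count_size andbT -all_count.
by apply/allPn; exists x => //=; rewrite ltxx.
Qed.

Lemma count_lt_ltn s x y : x \in s -> (x < y)%O -> (count (< x)%O s < count (< y)%O s)%nat.
Proof.
move=> + xy; elim: s => //= a s IH; rewrite inE => /predU1P[<-|xs].
  by rewrite ltxx xy ltnS; apply: sub_count => z /= /lt_trans; apply.
rewrite -addnS leq_add ?IH //.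
by case: (ltP a x) => // /lt_trans/(_ xy) ->.
Qed.

End CountLt.

Lemma infinite_set_sorted_seq (W : set R) (n : nat) :
  infinite_set W -> W 0 -> W 1 -> (2 <= n)%nat ->
  exists t : seq R, [/\ sorted <%O t, size t = n, {in t, forall x, W x}, 0 \in t & 1 \in t].
Proof.
move=> Winf W0 W1 n_ge2.
have [B BW card_B] := infinite_set_fset (n - 2) (infinite_setD Winf (finite_seq [:: 0; 1])).
pose Q := take (n - 2) (finmap.enum_fset B).
have QW x : x \in Q -> W x /\ x \notin [:: 0; 1].
  by move=> /mem_take /(BW x) [Wx /negP].
exists (sort <=%O [:: 0, 1 & Q]); split.
- rewrite sort_lt_sorted /= !inE negb_or eq_sym oner_eq0 take_uniq ?finmap.fset_uniq // !andbT.
  by apply/andP; split; apply/negP => /QW[_]; rewrite !inE eqxx ?orbT.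
- by rewrite size_sort /= size_takel // -addn2 subnK.
- by move=> x; rewrite mem_sort !inE => /predU1P[->|/predU1P[->|/QW []]].
- by rewrite mem_sort mem_head.
- by rewrite mem_sort !inE eqxx orbT.
Qed.

Lemma finite_order_embedding (W : set R) (S : seq R) :
  infinite_set W -> W 0 -> W 1 -> W `<=` [set x | 0 <= x <= 1] ->
  {subset S <= [pred x | 0 <= x <= 1]} ->
  exists h : R -> R, [/\ forall x, W (h x), h 0 = 0, h 1 = 1 &
                         {in S &, {homo h : a b / a < b}}].
Proof.
move=> Winf W0 W1 W01 S01.
pose s := undup [:: 0, 1 & S].
have s01 : {in s, forall x, 0 <= x <= 1}.
  by move=> x; rewrite mem_undup !inE => /predU1P[->|/predU1P[->|/S01]]; rewrite ?lexx ?ler01.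
have s0 : 0 \in s by rewrite mem_undup mem_head.
have s1 : 1 \in s by rewrite mem_undup !inE eqxx orbT.
have s_size : (2 <= size s)%nat.
  apply: (@uniq_leq_size _ [:: 0; 1]) => [|x]; first by rewrite /= inE eq_sym oner_eq0.
  by rewrite !inE => /predU1P[->|/eqP ->].
have [t [t_sorted t_size tW t0 t1]] := infinite_set_sorted_seq Winf W0 W1 s_size.
have t01 : {in t, forall x, 0 <= x <= 1} by move=> x /tW /W01.
have t_uniq : uniq t := sorted_uniq lt_trans ltxx t_sorted.
exists (fun x => nth 0 t (count (< x) s)); split.
- move=> x; case: (ltnP (count (< x) s) (size t)) => [lt_size|/(nth_default 0) ->] //.
  exact/tW/mem_nth.
- rewrite count_lt_min => [|y /s01 /andP[] //].
  by rewrite -[RHS](nth_index 0 t0) sorted_index_count // count_lt_min // => y /t01 /andP[].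
- rewrite count_lt_max ?undup_uniq // => [|y /s01 /andP[] //].
  rewrite -t_size -(count_lt_max t_uniq t1) => [|y /t01 /andP[] //].
  by rewrite -sorted_index_count // nth_index.
- move=> a b aS bS ab; have as_ : a \in s by rewrite mem_undup !inE aS !orbT.
  have bs : b \in s by rewrite mem_undup !inE bS !orbT.
  apply: (sorted_ltn_nth lt_trans 0 t_sorted); rewrite ?inE ?t_size ?count_lt_size //.
  exact: count_lt_ltn.
Qed.

Lemma finite_image_lt1_bound (S : seq R) (h : R -> R) :
  1 \in S -> h 1 = 1 -> {in S &, {homo h : a b / a < b}} ->
  exists2 d, d < 1 & {in S, forall a, a < 1 -> h a <= d}.
Proof.
move=> S1 h1 h_lt; exists (\big[Num.max/0]_(a <- S | a < 1) h a).
  by rewrite big_seq_cond; apply: bigmax_lt => // a /andP[aS a_lt1]; rewrite -h1 h_lt.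
by move=> a aS a_lt1; apply: le_bigmax_seq.
Qed.

Lemma finite_atom_values (D : finType) (U : Type) (emb : D -> U) (P : nat -> seq U -> R)
    (B : fo_form) :
  (forall p l, 0 <= P p l <= 1) ->
  exists S : seq R, [/\ 0 \in S, 1 \in S, {subset S <= [pred x | 0 <= x <= 1]} &
    forall p l, (p, size l) \in preds B -> P p (map emb l) \in S].
Proof.
move=> P01; exists [:: 0, 1 & flatten [seq [seq P pn.1 (map emb (val t)) | t : pn.2.-tuple D]
                                      | pn <- preds B]].
split; [exact: mem_head|by rewrite !inE eqxx orbT| |].
  move=> x; rewrite !inE => /predU1P[->|/predU1P[->|/flatten_mapP[pn _ /mapP[t _ ->]]]] //.
  - by rewrite lexx ler01.
  - by rewrite lexx ler01.
move=> p l pl; rewrite !inE; apply/orP; right; apply/orP; right.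
by apply/flatten_mapP; exists (p, size l) => //=; exact: (@fintype.image_f _ _ _ _ (in_tuple l)).
Qed.

Lemma finite_subdomain (U : Type) (u0 : U) (c : nat -> U) (ks : seq nat) (us : seq U) :
  exists (D : finType) (d0 : D) (emb : D -> U) (c' : nat -> D) (ws : seq D),
    [/\ emb d0 = u0, {in ks, forall k, emb (c' k) = c k} & map emb ws = us].
Proof.
pose K := (\max_(k <- ks) k).+1; pose L := mkseq c K ++ us.
have nth_L j : (j < size L)%nat -> nth u0 (u0 :: L) (@inord (size L) j.+1) = nth u0 L j.
  by move=> j_lt; rewrite inordK.
exists 'I_(size L).+1, ord0, (fun i : 'I_(size L).+1 => nth u0 (u0 :: L) i), (fun k => inord k.+1),
  (mkseq (fun j => inord (K + j).+1) (size us)); split=> //.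
  move=> k k_ks; have k_lt : (k < K)%nat by rewrite ltnS; apply: leq_bigmax_seq.
  rewrite nth_L ?size_cat ?size_mkseq ?ltn_addr //.
  by rewrite nth_cat size_mkseq k_lt nth_mkseq.
apply: (@eq_from_nth _ u0); rewrite size_map size_mkseq // => j j_lt.
rewrite (nth_map ord0) ?size_mkseq // nth_mkseq // nth_L ?size_cat ?size_mkseq ?ltn_add2l //.
by rewrite nth_cat size_mkseq ltnNge leq_addr addKn.
Qed.

Lemma valid_BS_transfer (V W : set R) (A : fo_form) :
  V `<=` [set x | 0 <= x <= 1] -> godel_set W -> infinite_set W ->
  BS_val A -> valid W A -> valid V A.
Proof.
move=> V01 [_ [W01 [W0 W1]]] Winf [_ [xs [ys [psi [qpsi ->]]]]] validW U u0 c P VP.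
have P01 p l : 0 <= P p l <= 1 by exact: V01.
apply/eqP; rewrite eq_le; case/andP: (eval01 c P01 (fun=> u0) (alls xs (exs ys psi))) => _ ->.
rewrite leNgt; apply/negP => /eval_alls_lt_inst [us sz_us exs_lt1].
have [D [d0 [emb [c' [ws [emb_d0 c'E emb_ws]]]]]] := finite_subdomain u0 c (consts psi) us.
have [S [S0 S1 S01 PS]] := finite_atom_values emb psi P01.
have [h [hW h0 h1 h_lt]] := finite_order_embedding Winf W0 W1 W01 S01.
have [d d_lt1 h_le_d] := finite_image_lt1_bound S1 h1 h_lt.
pose P' := map_interp h emb P.
have P'01 p l : 0 <= P' p l <= 1 by apply/W01/hW.
have inst_le_d js : size js = size ys ->
    eval c' P' (upds (upds (fun=> d0) xs ws) ys js) psi <= d.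
  move=> sz_js; have := eval_qfree_map S0 S1 (strict_godel_morph h0 h1 h_lt)
    (upds (upds (fun=> d0) xs ws) ys js) qpsi c'E PS.
  rewrite !comp_upds emb_ws.
  have -> : emb \o (fun _ : nat => d0) = fun=> u0 by apply: funext => x; rewrite /= emb_d0.
  move=> -[inS ->]; apply: h_le_d inS _.
  by apply: le_lt_trans exs_lt1; apply: (eval_inst_le_exs c P01); rewrite size_map.
have /eqP := validW D d0 c' P' (fun p l => hW _).
rewrite lt_eqF //; apply: le_lt_trans d_lt1.
have sz_ws : size ws = size xs by rewrite -sz_us -emb_ws size_map.
apply: le_trans (eval_alls_le_inst c' P'01 _ _ sz_ws) _.
exact: eval_exs_le inst_le_d.
Qed.

(* [k = 0] gives the element 1, as [0^-1 = 0]. *)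
Lemma VmE m x : (0 < m)%nat -> Vm m x <-> exists2 k, (k < m)%nat & x = 1 - k%:R^-1.
Proof.
move=> m_gt0; split=> [[->|[k [_ [k_lt ->]]]]|[[|k] k_lt ->]].
- by exists 0%nat; rewrite // invr0 subr0.
- by exists k.
- by left; rewrite invr0 subr0.
- by right; exists k.+1.
Qed.

Lemma Vm01 m : Vm m `<=` [set x | 0 <= x <= 1].
Proof.
move=> x [->|[k [k_gt0 [_ ->]]]]; first by rewrite /= ler01 lexx.
by rewrite /= subr_ge0 gerBl invr_ge0 ler0n andbT invf_le1 ?ltr0n // ler1n.
Qed.

Lemma Vm_sub m : Vm m `<=` Vm m.+1.
Proof.
move=> x [->|[k [k_gt0 [k_lt ->]]]]; first by left.
by right; exists k; do 2!split=> //; exact: ltnW.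
Qed.

Lemma Vm_no_inj m (v : 'I_m.+1 -> R) :
  (0 < m)%nat -> injective v -> ~ (forall i, Vm m (v i)).
Proof.
move=> m_gt0 v_inj Vv.
have /fin_all_exists [k kE] : forall i, exists k : 'I_m, v i = 1 - k%:R^-1.
  by move=> i; have [k k_lt ->] := (VmE _ m_gt0).1 (Vv i); exists (Ordinal k_lt).
have k_inj : injective k by move=> i j kij; apply: v_inj; rewrite !kE kij.
by have := leq_card k k_inj; rewrite !card_ord ltnn.
Qed.

Lemma valid_sub (V V' : set R) (A : fo_form) : V `<=` V' -> valid V' A -> valid V A.
Proof. by move=> VV' validV' U u0 c P VP; apply: validV' => p l; apply/VV'/VP. Qed.

Definition big_or (s : seq fo_form) : fo_form := foldr FOr FBot s.

Lemma eval_big_or_lt1 (U : Type) (c : nat -> U) (P : nat -> seq U -> R) e s :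
  (eval c P e (big_or s) < 1) = all (fun B => eval c P e B < 1) s.
Proof. by elim: s => [|B s IH] /=; rewrite ?ltr01 // gt_max IH. Qed.

Lemma godel_imp_lt1 a b : a <= 1 -> (godel_imp a b < 1) = (b < a).
Proof.
move=> a_le1; rewrite /godel_imp; case: (leP a b) => [ab|ba]; first by rewrite ltxx.
by rewrite (lt_le_trans ba a_le1).
Qed.

Definition prop_var (i : nat) : fo_form := FAtom i [::].

Definition chain (m : nat) : fo_form :=
  big_or [seq FImp (prop_var i.+1) (prop_var i) | i <- iota 0 m].

Lemma eval_chain_lt1 (U : Type) (c : nat -> U) (P : nat -> seq U -> R) e m :
  (forall p, P p [::] <= 1) ->
  (eval c P e (chain m) < 1) = all (fun i => P i [::] < P i.+1 [::]) (iota 0 m).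
Proof.
move=> P_le1; rewrite eval_big_or_lt1 all_map; apply: eq_all => i /=.
exact: (godel_imp_lt1 _ (P_le1 i.+1)).
Qed.

Lemma chain_BS m : BS_val (chain m).
Proof.
have chain_qfree s : qfree (big_or [seq FImp (prop_var i.+1) (prop_var i) | i <- s]).
  by elim: s.
have chain_closed s : free_vars (big_or [seq FImp (prop_var i.+1) (prop_var i) | i <- s]) = [::].
  by elim: s.
split; first by rewrite /sentence chain_closed.
by exists [::], [::], (chain m); split => //; apply: chain_qfree.
Qed.

Lemma chain_valid m : (0 < m)%nat -> valid (Vm m) (chain m).
Proof.
move=> m_gt0 U u0 c P VP; have P01 p l : 0 <= P p l <= 1 by apply/Vm01/VP.
apply/eqP; rewrite eq_le; case/andP: (eval01 c P01 (fun=> u0) (chain m)) => _ ->.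
rewrite leNgt eval_chain_lt1 => [|p]; last by case/andP: (P01 p [::]).
apply/negP => /allP incr.
have v_lt : {in [pred i | (i <= m)%nat] &, {homo (fun i => P i [::]) : i j / (i < j)%nat >-> i < j}}.
  apply: homo_ltn_lt_in => [i j _ j_le k /andP[_ kj]|i _ i1_le].
    exact: ltnW (leq_trans kj j_le).
  by apply: incr; rewrite mem_iota add0n leq0n; exact: i1_le.
have v_inj : injective (fun i : 'I_m.+1 => P i [::]).
  move=> i j /eqP; apply: contraTeq => /eqP neq_ij.
  have v_ord_lt (a b : 'I_m.+1) : (a < b)%nat -> P a [::] < P b [::].
    exact: v_lt (ltn_ord a) (ltn_ord b).
  case: (ltngtP i j) => [ij|ji|/val_inj //]; first by rewrite lt_eqF ?v_ord_lt.
  by rewrite gt_eqF ?v_ord_lt.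
exact: Vm_no_inj m_gt0 v_inj (fun i => VP i [::]).
Qed.

Lemma chain_not_valid m : ~ valid (Vm m.+1) (chain m).
Proof.
pose w i : R := if (i < m)%nat then 1 - (i.+1%:R)^-1 else 1.
have wV i : Vm m.+1 (w i).
  apply/(VmE _ (ltn0Sn m)); rewrite /w; case: ltnP => [i_lt|_].
    by exists i.+1.
  by exists 0%nat; rewrite ?invr0 ?subr0.
move=> validV; have /eqP := validV unit tt (fun=> tt) (fun p _ => w p) (fun p _ => wV p).
rewrite lt_eqF // eval_chain_lt1 => [|p]; last first.
  by rewrite /w; case: ifP => _; rewrite ?lexx ?gerBl ?invr_ge0.
apply/allP => i; rewrite mem_iota add0n /= => i_lt; rewrite /w i_lt.
case: ltnP => [i1_lt|_]; last by rewrite gtrBl invr_gt0 ltr0n.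
by rewrite ltrD2l ltrN2 ltf_pV2 ?posrE ?ltr0n // ltr_nat.
Qed.

Local Close Scope ring_scope.
Local Close Scope classical_set_scope.

Theorem corollary5p3 :
  (* (a) *)
  (forall (V V' : set R), godel_set V -> godel_set V' ->
     forall A : fo_form, BS_sat A -> (sat1 V A <-> sat1 V' A)) /\
  (* (b) *)
  (forall (V V' : set R), godel_set V -> godel_set V' ->
     infinite_set V -> infinite_set V' ->
     forall A : fo_form, BS_val A -> (valid V A <-> valid V' A)) /\
  (* (c) *)
  (forall m : nat, (2 <= m)%N ->
     (forall A : fo_form, BS_val A -> valid (Vm m.+1) A -> valid (Vm m) A) /\
     (exists A : fo_form, BS_val A /\ valid (Vm m) A /\ ~ valid (Vm m.+1) A)).
Proof.
split; [|split].
- move=> V V' [_ [V01 [V0 V1]]] [_ [V'01 [V'0 V'1]]] A A_BS.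
  by split; apply: sat1_BS_transfer.
- move=> V V' gV gV' V_inf V'_inf A A_BS; have [_ [V01 _]] := gV; have [_ [V'01 _]] := gV'.
  by split; apply: valid_BS_transfer.
- move=> m m_ge2; split; first by move=> A _; apply: valid_sub (@Vm_sub m).
  exists (chain m); split; first exact: chain_BS.
  by split; [apply: chain_valid; apply: ltnW|apply: chain_not_valid].
Qed.
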